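(* Let $(TN,\mu)$ be a $T$-system. For a transition $t$ of $TN$ and a pre-place $q\in{}^\bullet t$ with $\mu(q)=0$ let $$en(TN,\mu)_q:=\{(\tau,\delta):\ \tau\in en(TN,\mu),\ \delta=(\tau,\dots,q,t)\subset TN \text{ an elementary path}\}.$$ (1) Let $t$ be a transition of $TN$ which is enabled at some marking reachable from $\mu$. Then for each pre-place $q\in{}^\bullet t$ with $\mu(q)=0$ there is a pair $(\tau,\delta)\in en(TN,\mu)_q$ with $\Vert\mu\Vert_\delta=0$. (2) Assume moreover that $(TN,\mu)$ is perpetual with regeneration cluster $cl$, and let $t_{cl}$ be the unique transition of $cl$. (i) For each transition $t$ of $TN$ having a pre-place $p\in{}^\bullet t$ with $\mu(p)=1$, and for each pre-place $q\in{}^\bullet t$ with $\mu(q)=0$, there is a pair $(\tau,\delta)\in en(TN,\mu)_q$ with $\Vert\mu\Vert_\delta=0$ and $t_{cl}\notin\delta_{seg}$, where $\delta_{seg}:=(\tau,\dots,q)$ is the segment of $\delta$ ending at $q$. (ii) Each elementary path $\delta\subset TN$ with $t_{cl}\notin\delta$ satisfies $\Vert\mu\Vert_\delta\le 1$.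
   Context: A net $N=(P,T,F)$: finite disjoint sets of places and transitions and edges $F\subset(P\times T)\cup(T\times P)$; nets are weakly connected. ${}^\bullet x$, $x^\bullet$ are pre-set and post-set. A $T$-net is a net in which every place has exactly one pre-transition and exactly one post-transition; a $T$-system is a pair $(TN,\mu)$ with $TN$ a $T$-net and $\mu$ a marking (a map from places to $\mathbb{N}$). A transition $t$ is enabled at $\mu$ if all places of ${}^\bullet t$ carry a token; firing removes one token from each pre-place and adds one to each post-place. $en(TN,\mu)$ is the set of transitions enabled at $\mu$; reachable markings are those obtained by firing finite sequences of successively enabled transitions. A path is a nonempty sequence of nodes $(x_1,\dots,x_n)$ with $(x_i,x_{i+1})\in F$; it is elementary if its nodes are pairwise distinct. For a set of nodes $X$ (e.g. the nodes of a path), $\Vert\mu\Vert_X=\sum_{p\in X\text{ place}}\mu(p)$. The cluster of a node $x$ is the smallest subnet containing $x$ containing $p^\bullet$ for each of its places $p$ and ${}^\bullet t$ for each of its transitions $t$; $\mu_{cl}$ is the marking equal to $1$ on the places of $cl$ and $0$ elsewhere. A Petri net $(N,\mu)$ is perpetual with regeneration cluster $cl$ if it is live and bounded and $\mu_{cl}$ is a home marking (reachable from every reachable marking). *)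

From mathcomp Require Import all_boot.
Set Implicit Arguments. Unset Strict Implicit. Unset Printing Implicit Defensive.

Section Nets.
(* A net N = (P,T,F): places P and transitions T are finite types (disjoint
   by construction, nodes are P + T); F is given by
   pt p t  <-> (p,t) in F   and   tp t p <-> (t,p) in F. *)
Variables (P T : finType) (pt : P -> T -> bool) (tp : T -> P -> bool).

Definition node := (P + T)%type.

Definition flow (x y : node) : bool :=
  match x, y with
  | inl p, inr t => pt p t
  | inr t, inl p => tp t p
  | _, _ => false
  end.

Definition weakly_connected : Prop :=
  forall x y : node, connect (fun a b => flow a b || flow b a) x y.

Definition is_Tnet : Prop :=
  weakly_connected /\
  forall p : P, #|[set t | tp t p]| = 1 /\ #|[set t | pt p t]| = 1.

Definition marking := {ffun P -> nat}.

Definition enabled (m : marking) (t : T) : bool :=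
  [forall p, pt p t ==> (0 < m p)].

Definition fire (m : marking) (t : T) : marking :=
  [ffun p => m p - pt p t + tp t p].

Inductive reachable (m : marking) : marking -> Prop :=
  | reach_refl : reachable m m
  | reach_step m' t : reachable m m' -> enabled m' t -> reachable m (fire m' t).

Definition is_path (d : seq node) : bool :=
  if d is x :: s then path flow x s else false.

Definition elementary_path (d : seq node) : bool := is_path d && uniq d.

Definition mnorm (m : marking) (d : seq node) : nat :=
  \sum_(p : P | inl p \in d) m p.

Definition en_q (m : marking) (q : P) (t : T) (tau : T) (d : seq node) : Prop :=
  enabled m tau /\ elementary_path d /\
  exists s, d = inr tau :: s ++ [:: inl q; inr t].

Definition cluster_closed (S : {set node}) : Prop :=
  (forall p t, inl p \in S -> pt p t -> inr t \in S) /\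
  (forall t p, inr t \in S -> pt p t -> inl p \in S).

Definition is_cluster_of (x : node) (cl : {set node}) : Prop :=
  x \in cl /\ cluster_closed cl /\
  forall S : {set node}, x \in S -> cluster_closed S -> cl \subset S.

Definition is_cluster (cl : {set node}) : Prop := exists x, is_cluster_of x cl.

Definition mu_cl (cl : {set node}) : marking := [ffun p => nat_of_bool (inl p \in cl)].

Definition live (m0 : marking) : Prop :=
  forall m, reachable m0 m -> forall t, exists m', reachable m m' /\ enabled m' t.

Definition bounded (m0 : marking) : Prop :=
  exists k, forall m, reachable m0 m -> forall p, m p <= k.

Definition home_marking (m0 h : marking) : Prop :=
  forall m, reachable m0 m -> reachable m h.

Definition perpetual (m0 : marking) (cl : {set node}) : Prop :=
  live m0 /\ bounded m0 /\ is_cluster cl /\ home_marking m0 (mu_cl cl).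

End Nets.

From mathcomp Require Import all_boot zify.
From Stdlib Require Import Classical_Prop.
Set Implicit Arguments. Unset Strict Implicit. Unset Printing Implicit Defensive.

(* In a T-net every place p is an arc from the transition pre p to the
   transition post p.  Along a chain of places from a to b the number of tokens
   grows by one when a fires and drops by one when b fires, so it is invariant
   on cycles, and two chains with the same ends keep their difference.
   (1) Walking backwards from t through empty pre-places, the number of steps
   after which the current transition can first be enabled strictly decreases;
   this makes the walk elementary and ends it at a transition enabled at mu.
   (2) mu_cl marks exactly the pre-places of t_cl.  Liveness from mu_cl yields,
   for every transition, a chain from t_cl that is empty at mu_cl and, since
   boundedness excludes transitions without pre- or post-places, a chain back
   to t_cl through a single pre-place of t_cl.  Comparing token counts at mu
   and at mu_cl along these chains gives (i) and (ii). *)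

Lemma exists_fun_of_card1 (A B : finType) (r : A -> B -> bool) :
  (forall a, #|[set b | r a b]| = 1) -> exists f : A -> B, forall a b, r a b = (b == f a).
Proof.
move=> r1; apply: (fin_all_exists (P := fun a b => forall b', r a b' = (b' == b))) => a.
have /eqP/cards1P[b rb] := r1 a.
by exists b => b'; rewrite -in_set1 -rb inE.
Qed.

Section TNet.
Variables (P T : finType) (pt : P -> T -> bool) (tp : T -> P -> bool).
Variables (pre post : P -> T).
Hypothesis tpE : forall p t, tp t p = (t == pre p).
Hypothesis ptE : forall p t, pt p t = (t == post p).

Local Notation node := (node P T).
Local Notation marking := (marking P).
Local Notation enabled := (enabled pt).
Local Notation fire := (fire pt tp).
Local Notation reachable := (reachable pt tp).
Local Notation flow := (flow pt tp).
Local Notation elementary_path := (elementary_path pt tp).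

Lemma enabled_pre m t p : enabled m t -> pt p t -> 0 < m p.
Proof. by move=> /forallP/(_ p)/implyP. Qed.

Lemma fire_balance m v p :
  enabled m v -> fire m v p + (v == post p) = m p + (v == pre p).
Proof.
move=> m_v; rewrite ffunE -ptE -tpE.
case p_v: (pt p v); last by lia.
by have := enabled_pre m_v p_v; lia.
Qed.

Lemma reachable_trans m1 m2 m3 :
  reachable m1 m2 -> reachable m2 m3 -> reachable m1 m3.
Proof. by move=> m12; elim=> // m t _ m13; apply: reach_step. Qed.

Fixpoint place_chain (a : T) (s : seq P) (b : T) : bool :=
  if s is p :: s' then (pre p == a) && place_chain (post p) s' b else a == b.

Lemma place_chain_cat a s1 b s2 c :
  place_chain a s1 b -> place_chain b s2 c -> place_chain a (s1 ++ s2) c.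
Proof.
elim: s1 a => [|p s1 IH] a /=; first by move=> /eqP ->.
by case/andP=> -> /IH.
Qed.

Lemma place_chain_rcons a s p :
  place_chain a s (pre p) -> place_chain a (rcons s p) (post p).
Proof. by move=> s_p; rewrite -cats1; apply: (place_chain_cat s_p); rewrite /= !eqxx. Qed.

Definition tokens (m : marking) (s : seq P) : nat := \sum_(p <- s) m p.

Lemma tokens_cat m s1 s2 : tokens m (s1 ++ s2) = tokens m s1 + tokens m s2.
Proof. exact: big_cat. Qed.

Lemma tokens_fire a s b m v : place_chain a s b -> enabled m v ->
  tokens (fire m v) s + (v == b) = tokens m s + (v == a).
Proof.
rewrite /tokens; elim: s a => [|p s IH] a /=; first by move=> /eqP -> _; rewrite !big_nil.
case/andP=> /eqP pre_p s_chain m_v; rewrite !big_cons.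
by have := fire_balance p m_v; have := IH _ s_chain m_v; rewrite pre_p; lia.
Qed.

Lemma tokens_parallel_chains a b s1 s2 m m' :
  place_chain a s1 b -> place_chain a s2 b -> reachable m m' ->
  tokens m' s1 + tokens m s2 = tokens m' s2 + tokens m s1.
Proof.
move=> s1_chain s2_chain; elim=> [|m1 t _ IH m1_t]; first exact: addnC.
by have := tokens_fire s1_chain m1_t; have := tokens_fire s2_chain m1_t; lia.
Qed.

Lemma tokens_cycle a s m m' :
  place_chain a s a -> reachable m m' -> tokens m' s = tokens m s.
Proof.
move=> s_cycle m_m'; have := tokens_parallel_chains (s2 := [::]) s_cycle (eqxx a) m_m'.
by rewrite /tokens !big_nil; lia.
Qed.

Definition place_of (x : node) : option P := if x is inl p then Some p else None.

Definition places (d : seq node) : seq P := pmap place_of d.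

Lemma place_ofK : ocancel place_of inl.
Proof. by case. Qed.

Lemma mem_places p d : (p \in places d) = (inl p \in d).
Proof. exact: can2_mem_pmap place_ofK _ d p. Qed.

Lemma mnorm_places m d : uniq d -> mnorm m d = tokens m (places d).
Proof.
move=> d_uniq; rewrite /tokens big_uniq ?(pmap_uniq place_ofK) //.
by apply: eq_bigl => p; rewrite mem_places.
Qed.

Definition src (x : node) : T := match x with inl p => pre p | inr a => a end.
Definition tgt (x : node) : T := match x with inl p => post p | inr a => a end.

Lemma path_place_chain x s :
  path flow x s -> place_chain (src x) (places (x :: s)) (tgt (last x s)).
Proof.
elim: s x => [|y s IH] x /=; first by case: x => [p|a] _ /=; rewrite !eqxx.
case/andP=> x_y /IH; case: x x_y => [p|a]; case: y => [p'|u] //=.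
  by rewrite ptE => /eqP -> ->; rewrite eqxx.
by rewrite tpE => /eqP ->.
Qed.

Lemma count_places_tgt c x s : path flow x s -> inr c \notin s ->
  count (fun p => post p == c) (places (x :: s)) <= (tgt (last x s) == c).
Proof.
elim: s x => [|y s IH] x /=; first by case: x => [p|a] //= _ _; rewrite addn0.
rewrite inE negb_or => /andP[x_y y_s] /andP[c_y c_s].
have := IH y y_s c_s; case: x x_y => [p|a] //=.
case: y c_y y_s => [p'|u] //= c_u _; rewrite ptE => /eqP <-.
by rewrite (_ : (u == c) = false) //; apply: contraNF c_u => /eqP ->.
Qed.

Lemma elementary_path_extend x s q : elementary_path (x :: s) ->
  last x s = inr (pre q) -> inl q \notin x :: s -> inr (post q) \notin x :: s ->
  elementary_path (x :: s ++ [:: inl q; inr (post q)]).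
Proof.
case/andP=> s_path s_uniq s_last q_s post_s.
apply/andP; split; first by rewrite /= cat_path [path _ _ _]s_path s_last /= tpE ptE !eqxx.
by rewrite -cat_cons cat_uniq s_uniq /= orbF negb_or q_s post_s.
Qed.

Lemma elementary_path_chain_from c x s t :
  elementary_path (x :: rcons s (inr t)) -> inr c \in x :: s ->
  exists2 alpha, place_chain c alpha t &
    [/\ t != c, count (fun p => post p == c) alpha = 0
       & {subset alpha <= places (x :: rcons s (inr t))}].
Proof.
move=> d_path c_in; move: d_path; case/splitPl: c_in => s1 s2 last_s1 /andP[].
rewrite rcons_cat => s_path; rewrite -cat_cons cat_uniq => /and3P[_ c_s2 _].
have s2_path : path flow (inr c) (rcons s2 (inr t)).
  by move: s_path; rewrite /= cat_path last_s1 => /andP[].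
have c_notin : inr c \notin rcons s2 (inr t).
  by apply: contra c_s2 => c_in; apply/hasP; exists (inr c); rewrite // -last_s1 mem_last.
have t_c : t != c by apply: contraNneq c_notin => ->; rewrite mem_rcons mem_head.
exists (places (inr c :: rcons s2 (inr t))).
  by have := path_place_chain s2_path; rewrite last_rcons.
split=> //.
  apply/eqP; rewrite -leqn0; have := count_places_tgt s2_path c_notin.
  by rewrite last_rcons /= (negbTE t_c).
by move=> p; rewrite !mem_places mem_cat inE /= => ->; rewrite orbT.
Qed.

Inductive reachable_in (m0 : marking) : nat -> marking -> Prop :=
  | reach_in0 : reachable_in m0 0 m0
  | reach_inS k m t :
      reachable_in m0 k m -> enabled m t -> reachable_in m0 k.+1 (fire m t).

Definition enabled_within (m0 : marking) (t : T) (k : nat) : Prop :=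
  exists j m, [/\ j <= k, reachable_in m0 j m & enabled m t].

Lemma reachable_enabled_within m0 m t :
  reachable m0 m -> enabled m t -> exists k, enabled_within m0 t k.
Proof.
move=> m0_m m_t; suff [k m0k_m] : exists k, reachable_in m0 k m by exists k, k, m.
elim: m0_m => [|m1 v _ [k m0k_m1] m1_v]; first by exists 0; constructor.
by exists k.+1; constructor.
Qed.

Lemma enabled_within_mono m0 t k k' :
  k <= k' -> enabled_within m0 t k -> enabled_within m0 t k'.
Proof. by move=> k_k' [j [m [j_k ? ?]]]; exists j, m; split=> //; apply: leq_trans k_k'. Qed.

Lemma reachable_in0 m0 m : reachable_in m0 0 m -> m = m0.
Proof. by inversion 1. Qed.

Lemma enabled_within0 m0 t : enabled_within m0 t 0 -> enabled m0 t.
Proof.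
case=> j [m [j0 m0j_m m_t]]; move: j0 m0j_m; rewrite leqn0 => /eqP ->.
by move/reachable_in0 <-.
Qed.

Lemma reachable_in_gain m0 j m p : reachable_in m0 j m -> m0 p < m p ->
  0 < j /\ enabled_within m0 (pre p) j.-1.
Proof.
elim=> [|k m1 t m0k_m1 IH m1_t]; first by rewrite ltnn.
case: (ltnP (m0 p) (m1 p)) => [/IH [_ E_pre] _|m1_le].
  by split=> //; apply: enabled_within_mono E_pre; lia.
rewrite ffunE => gain; have : tp t p by apply: contraLR gain => /negbTE ->; lia.
by rewrite tpE => /eqP <-; split=> //; exists k, m1.
Qed.

Lemma enabled_within_empty_pre m0 p k : enabled_within m0 (post p) k -> m0 p = 0 ->
  0 < k /\ enabled_within m0 (pre p) k.-1.
Proof.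
case=> j [m [j_k m0j_m m_post]] p0.
have [j_gt0 E_pre] : 0 < j /\ enabled_within m0 (pre p) j.-1.
  by apply: reachable_in_gain m0j_m _; rewrite p0 (enabled_pre m_post) // ptE.
by split; [lia | apply: enabled_within_mono E_pre; lia].
Qed.

(* Invariant: every node x of the path satisfies enabled_within m0 (tgt x) k.
   When post q is not enabled within k - 1 steps, this keeps inl q and
   inr (post q) off the path built for pre q. *)
Lemma empty_path_to m0 k q : enabled_within m0 (post q) k -> m0 q = 0 ->
  exists tau s, let d := inr tau :: s ++ [:: inl q; inr (post q)] in
  [/\ enabled m0 tau, elementary_path d,
      forall p, inl p \in d -> m0 p = 0
    & forall x, x \in d -> enabled_within m0 (tgt x) k].
Proof.
elim: k q => [|k IH] q E_post q0.
  by have := enabled_pre (enabled_within0 E_post) (p := q); rewrite ptE q0 eqxx => /(_ isT).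
case: (classic (enabled_within m0 (post q) k)) => [E_post'|late].
  have [tau [s [tau_en d_path d0 d_E]]] := IH q E_post' q0.
  by exists tau, s; split=> // x /d_E; apply: enabled_within_mono.
have [_ E_pre] := enabled_within_empty_pre E_post q0.
have off_path d x : (forall y, y \in d -> enabled_within m0 (tgt y) k) ->
    tgt x = post q -> x \notin d.
  by move=> d_E x_post; apply/negP => /d_E; rewrite x_post.
case pre_en: (enabled m0 (pre q)).
  exists (pre q), [::]; split=> //=.
  - rewrite /elementary_path /= tpE ptE !eqxx !inE /= andbT.
    by apply/eqP => -[pre_post]; apply: late; rewrite -pre_post.
  - by move=> p; rewrite !inE => /or3P[|/eqP[->]|].
  - move=> x; rewrite !inE => /or3P[] /eqP -> //=.
    exact: enabled_within_mono (leqnSn k) E_pre.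
have [q1 [q1_pre q1_0]] : exists q1, post q1 = pre q /\ m0 q1 = 0.
  move/negbT: pre_en => /forallPn[q1]; rewrite negb_imply -leqNgt leqn0 ptE.
  by case/andP=> /eqP pre_q /eqP q1_0; exists q1.
rewrite -q1_pre in E_pre.
have [tau [s [tau_en d_path d0 d_E]]] := IH q1 E_pre q1_0.
rewrite q1_pre in d_path d0 d_E.
exists tau, (s ++ [:: inl q1; inr (pre q)]); split=> //.
- apply: elementary_path_extend => //; first by rewrite last_cat.
  + exact: off_path d_E _.
  + exact: off_path d_E _.
- by move=> p; rewrite -cat_cons mem_cat => /orP[/d0|]; rewrite // !inE => /orP[/eqP[->]|].
- move=> x; rewrite -cat_cons mem_cat => /orP[/d_E|]; first exact: enabled_within_mono.
  by rewrite !inE => /orP[] /eqP -> /=; apply: enabled_within_mono E_post.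
Qed.

Lemma empty_en_q m0 m t q : reachable m0 m -> enabled m t -> pt q t -> m0 q = 0 ->
  exists tau d, en_q pt tp m0 q t tau d /\ forall p, inl p \in d -> m0 p = 0.
Proof.
move=> m0_m m_t; rewrite ptE => /eqP t_post q0; rewrite t_post in m_t *.
have [k E_post] := reachable_enabled_within m0_m m_t.
have [tau [s [tau_en d_path d0 _]]] := empty_path_to E_post q0.
exists tau, (inr tau :: s ++ [:: inl q; inr (post q)]).
by do !split=> //; exists s.
Qed.

Lemma reachable_shift m m' (D : P -> nat) : reachable m m' ->
  reachable [ffun p => m p + D p] [ffun p => m' p + D p].
Proof.
elim=> [|m1 t _ IH m1_t]; first exact: reach_refl.
have m1D_t : enabled [ffun p => m1 p + D p] t.
  by apply/forallP => p; apply/implyP => /(enabled_pre m1_t); rewrite ffunE; lia.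
have -> : [ffun p => fire m1 t p + D p] = fire [ffun p => m1 p + D p] t.
  apply/ffunP => p; rewrite !ffunE; case p_t: (pt p t); last by lia.
  by have := enabled_pre m1_t p_t; lia.
exact: reach_step IH m1D_t.
Qed.

Lemma bounded_no_pumping m0 m m' : bounded pt tp m0 -> reachable m0 m ->
  reachable m m' -> (forall p, m p <= m' p) -> m' = m.
Proof.
move=> [B bounded_B] m0_m m_m' m_le.
pose pumped n : marking := [ffun p => m p + n * (m' p - m p)].
have m_pumped n : reachable m (pumped n).
  elim: n => [|n IH].
    have -> : pumped 0 = m by apply/ffunP => p; rewrite ffunE mul0n addn0.
    exact: reach_refl.
  apply: reachable_trans IH _.
  have := reachable_shift (fun p => n * (m' p - m p)) m_m'.
  congr reachable; apply/ffunP => p; rewrite !ffunE mulSn; have := m_le p; lia.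
apply/ffunP => p; have := bounded_B _ (reachable_trans m0_m (m_pumped B.+1)) p.
by rewrite ffunE; have := m_le p; nia.
Qed.

(* Firing a transition without post-places only removes tokens, so such
   firings can be skipped. *)
Lemma reachable_skip_sink u a s m m' : (forall p, pre p != u) -> place_chain a s u ->
  reachable m m' ->
  exists2 m'', reachable m m'' & (forall p, m' p <= m'' p) /\ tokens m s <= tokens m'' s.
Proof.
move=> u_sink s_chain; elim=> [|m1 v _ [m'' m_m'' [m1_le s_le]] m1_v].
  by exists m; [exact: reach_refl | split].
have [->|v_u] := eqVneq v u.
  exists m'' => //; split=> // p; rewrite ffunE (tpE p u) eq_sym (negbTE (u_sink p)).
  by have := m1_le p; lia.
have m''_v : enabled m'' v.
  by apply/forallP => p; apply/implyP => /(enabled_pre m1_v); have := m1_le p; lia.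
exists (fire m'' v); first exact: reach_step m_m'' m''_v.
split; first by move=> p; rewrite !ffunE; have := m1_le p; lia.
by have := tokens_fire s_chain m''_v; rewrite (negbTE v_u); lia.
Qed.

Section Perpetual.
Variables (mu : marking) (cl : {set node}) (tcl : T).
Hypothesis connected : weakly_connected pt tp.
Hypothesis live_mu : live pt tp mu.
Hypothesis bounded_mu : bounded pt tp mu.
Hypothesis cl_cluster : is_cluster pt cl.
Hypothesis home_mu_cl : home_marking pt tp mu (mu_cl cl).
Hypothesis tcl_cl : inr tcl \in cl.

Local Notation mcl := (mu_cl cl).
Local Notation at_tcl := (fun p => post p == tcl).

Lemma mu_clE p : mcl p = (post p == tcl).
Proof.
have [x [x_cl [[_ cl_pre] cl_min]]] := cl_cluster.
pose star u : {set node} := [set y | tgt y == u].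
have star_closed u : cluster_closed pt (star u).
  by split=> [p' v|v p']; rewrite !inE ptE /= => /eqP-> /eqP->.
have /subsetP cl_star : cl \subset star (tgt x) by apply: cl_min; rewrite ?inE.
rewrite ffunE; congr nat_of_bool; apply/idP/eqP => [/cl_star|post_p].
  by have := cl_star _ tcl_cl; rewrite !inE /= => /eqP -> /eqP.
by apply: cl_pre tcl_cl _; rewrite ptE post_p.
Qed.

Lemma tokens_mu_cl s : tokens mcl s = count at_tcl s.
Proof. by rewrite /tokens; elim: s => [|p s IH]; rewrite ?big_nil ?big_cons //= mu_clE IH. Qed.

Lemma mu_cl_reachable : reachable mu mcl.
Proof. exact: home_mu_cl (reach_refl _ _ _). Qed.

Lemma mu_cl_enabled_tcl : enabled mcl tcl.
Proof. by apply/forallP => p; apply/implyP; rewrite mu_clE ptE eq_sym => ->. Qed.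

Lemma enabled_within_mu_cl v : exists k, enabled_within mcl v k.
Proof.
have [m [mcl_m m_v]] := live_mu mu_cl_reachable v.
exact: reachable_enabled_within mcl_m m_v.
Qed.

Lemma exists_pre_place v : v != tcl -> exists p, post p = v.
Proof.
move=> v_tcl; case: (pickP (fun p => post p == v)) => [p /eqP|no_pre]; first by exists p.
have v_en m : enabled m v by apply/forallP => p; rewrite ptE (eq_sym v) no_pre.
have fire_v : fire mu v = mu.
  apply: bounded_no_pumping bounded_mu (reach_refl _ _ _) _ _.
    exact: reach_step (reach_refl _ _ _) (v_en mu).
  by move=> p; rewrite ffunE ptE (eq_sym v) no_pre; lia.
have no_post p : tp v p = false.
  have /eqP := congr1 (fun m : marking => m p) fire_v.
  by rewrite ffunE ptE (eq_sym v) no_pre; lia.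
have /connectP[[|z s] /= path_vz last_z] := connected (inr v) (inr tcl).
  by move: last_z v_tcl => [->]; rewrite eqxx.
move: path_vz => /andP[+ _]; case: z {last_z} => [p|u] //=.
by rewrite no_post ptE (eq_sym v) no_pre.
Qed.

Lemma chain_from_tcl k a : enabled_within mcl a k ->
  exists2 B, place_chain tcl B a & count at_tcl B = 0.
Proof.
elim: k a => [|k IH] a E_a;
  (have [->|a_tcl] := eqVneq a tcl; first by exists [::]; rewrite //= eqxx).
all: have [p post_p] := exists_pre_place a_tcl.
all: have p0 : mcl p = 0 by rewrite mu_clE post_p (negbTE a_tcl).
all: rewrite -post_p in E_a; have [k_gt0 E_pre] := enabled_within_empty_pre E_a p0.
  by [].
have [B B_chain B_count] := IH _ E_pre.
exists (rcons B p); first by rewrite -post_p; apply: place_chain_rcons.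
by rewrite -cats1 count_cat B_count /= post_p (negbTE a_tcl).
Qed.

Lemma exists_post_place u : u != tcl -> exists p, pre p = u.
Proof.
move=> u_tcl; case: (pickP (fun p => pre p == u)) => [p /eqP|no_post]; first by exists p.
have [k E_u] := enabled_within_mu_cl u; have [B B_chain _] := chain_from_tcl E_u.
have mcl_fired : reachable mcl (fire mcl tcl).
  exact: reach_step (reach_refl _ _ _) mu_cl_enabled_tcl.
have [m m_fired [mcl_le B_le]] := reachable_skip_sink (fun p => negbT (no_post p))
  B_chain (home_mu_cl (reachable_trans mu_cl_reachable mcl_fired)).
have m_mcl : m = mcl.
  apply: bounded_no_pumping bounded_mu mu_cl_reachable _ mcl_le.
  exact: reachable_trans mcl_fired m_fired.
rewrite m_mcl in B_le; have := tokens_fire B_chain mu_cl_enabled_tcl.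
by rewrite eqxx eq_sym (negbTE u_tcl) /=; lia.
Qed.

(* Going forward from b through post-places not feeding t_cl, the number of
   steps after which the current transition can first be enabled from mu_cl
   strictly increases; it is bounded by K. *)
Lemma chain_to_tcl b : b != tcl -> exists2 F, place_chain b F tcl & count at_tcl F <= 1.
Proof.
have [f E_f] : exists f : T -> nat, forall v, enabled_within mcl v (f v).
  exact: fin_all_exists enabled_within_mu_cl.
pose K := \max_v f v.
have E_K v : enabled_within mcl v K by apply: enabled_within_mono (E_f v); exact: leq_bigmax.
suff chain_late n b' : b' != tcl -> (forall j, enabled_within mcl b' j -> K - n <= j) ->
    exists2 F, place_chain b' F tcl & count at_tcl F <= 1.
  by move=> b_tcl; apply: (chain_late K) => // j _; rewrite subnn.
elim: n b' => [|n IH] b' b_tcl b_late; have [p pre_p] := exists_post_place b_tcl.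
all: have [p_tcl|p_tcl] := eqVneq (post p) tcl;
  first by exists [:: p]; rewrite /= ?pre_p ?p_tcl ?eqxx.
all: have p0 : mcl p = 0 by rewrite mu_clE (negbTE p_tcl).
  have [K_gt0 E_pre] := enabled_within_empty_pre (E_K (post p)) p0.
  by rewrite pre_p in E_pre; have := b_late _ E_pre; lia.
have [F F_chain F_count] : exists2 F, place_chain (post p) F tcl & count at_tcl F <= 1.
  apply: IH p_tcl _ => j E_post; have [j_gt0 E_pre] := enabled_within_empty_pre E_post p0.
  by rewrite pre_p in E_pre; have := b_late _ E_pre; lia.
by exists (p :: F); rewrite /= ?pre_p ?eqxx ?(negbTE p_tcl).
Qed.

(* If t_cl were on the segment, the rest of the path would be a chain from t_cl
   to t empty at mu and at mu_cl, parallel to a chain from t_cl through p that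
   is empty at mu_cl; the invariant difference would empty p. *)
Lemma en_q_avoid_tcl t p q : pt p t -> mu p = 1 -> pt q t -> mu q = 0 ->
  exists tau d, en_q pt tp mu q t tau d /\ mnorm mu d = 0 /\
                inr tcl \notin belast (head (inr tcl) d) (behead d).
Proof.
move=> p_t p1 q_t q0.
have [m [mu_m m_t]] := live_mu (reach_refl _ _ _) t.
have [tau [d [d_en_q d0]]] := empty_en_q mu_m m_t q_t q0.
exists tau, d; split=> //; split; first by rewrite /mnorm big1.
case: d_en_q d0 => _ [d_path [s d_def]] d0; subst d.
rewrite -[_ ++ _]/(s ++ [:: inl q] ++ [:: inr t]) catA cats1 in d_path d0 *.
rewrite /= belast_rcons.
apply/negP => /(elementary_path_chain_from d_path).
case=> alpha alpha_chain [t_tcl alpha_count alpha_d].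
have [k E_pre] := enabled_within_mu_cl (pre p).
have [B B_chain B_count] := chain_from_tcl E_pre.
have post_p : post p = t by move: p_t; rewrite ptE => /eqP.
have Bp_chain := place_chain_rcons B_chain; rewrite post_p in Bp_chain.
have := tokens_parallel_chains Bp_chain alpha_chain mu_cl_reachable.
have -> : tokens mu alpha = 0.
  by apply: big1_seq => p' /andP[_ /alpha_d]; rewrite mem_places; apply: d0.
rewrite !tokens_mu_cl alpha_count -cats1 count_cat B_count /= post_p (negbTE t_tcl).
by rewrite tokens_cat /tokens big_seq1 p1; lia.
Qed.

(* Close the path into a cycle through t_cl; its token count is the same at mu
   as at mu_cl, where it counts the places feeding t_cl, at most one. *)
Lemma mnorm_le1_avoid_tcl d : elementary_path d -> inr tcl \notin d -> mnorm mu d <= 1.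
Proof.
case: d => [|x s] //= /andP[s_path d_uniq] tcl_d.
have tcl_s : inr tcl \notin s by apply: contra tcl_d => tcl_s; rewrite inE tcl_s orbT.
rewrite mnorm_places //.
have S_chain := path_place_chain s_path; have S_count := count_places_tgt s_path tcl_s.
set S := places _ in S_chain S_count *; set b := tgt _ in S_chain S_count.
have [k E_src] := enabled_within_mu_cl (src x).
have [B B_chain B_count] := chain_from_tcl E_src.
have [F F_chain F_count] :
    exists2 F, place_chain b F tcl & count at_tcl S + count at_tcl F <= 1.
  have [b_tcl|b_tcl] := eqVneq b tcl.
    by rewrite b_tcl eqxx in S_count; exists [::]; rewrite /= ?b_tcl ?eqxx ?addn0.
  have [F F_chain F_count] := chain_to_tcl b_tcl.
  by rewrite (negbTE b_tcl) leqn0 in S_count; exists F; rewrite ?(eqP S_count).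
have cycle := place_chain_cat B_chain (place_chain_cat S_chain F_chain).
have := tokens_cycle cycle mu_cl_reachable.
by rewrite tokens_mu_cl !count_cat !tokens_cat B_count; lia.
Qed.

End Perpetual.

End TNet.

Theorem proposition5p1 (P T : finType) (pt : P -> T -> bool) (tp : T -> P -> bool)
  (HT : is_Tnet pt tp) (mu : marking P) :
  (* (1) *)
  (forall t : T, (exists m, reachable pt tp mu m /\ enabled pt m t) ->
     forall q : P, pt q t -> mu q = 0 ->
     exists tau d, en_q pt tp mu q t tau d /\ mnorm mu d = 0) /\
  (* (2) *)
  (forall (cl : {set node P T}) (tcl : T),
     perpetual pt tp mu cl -> inr tcl \in cl ->
     (* (i) *)
     (forall t : T, (exists p, pt p t /\ mu p = 1) ->
        forall q : P, pt q t -> mu q = 0 ->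
        exists tau d, en_q pt tp mu q t tau d /\ mnorm mu d = 0 /\
                      inr tcl \notin belast (head (inr tcl) d) (behead d)) /\
     (* (ii) *)
     (forall d : seq (node P T), elementary_path pt tp d -> inr tcl \notin d ->
        mnorm mu d <= 1)).
Proof.
case: HT => connected card1.
have [pre tpE] := exists_fun_of_card1 (r := fun p t => tp t p) (fun p => proj1 (card1 p)).
have [post ptE] := exists_fun_of_card1 (r := pt) (fun p => proj2 (card1 p)).
split=> [t [m [mu_m m_t]] q q_t q0|cl tcl [live_mu [bounded_mu [cl_cluster home]]] tcl_cl].
  have [tau [d [d_en_q d0]]] := empty_en_q tpE ptE mu_m m_t q_t q0.
  by exists tau, d; split=> //; rewrite /mnorm big1.
split=> [t [p [p_t p1]] q q_t q0|d].
  exact: (en_q_avoid_tcl tpE ptE connected live_mu bounded_mu cl_cluster home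
    tcl_cl p_t p1 q_t q0).
exact: (mnorm_le1_avoid_tcl tpE ptE connected live_mu bounded_mu cl_cluster home
  tcl_cl).
Qed.
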